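(* Let $\lambda\in\mathbb{Z}_2$ and consider $f(x)=x^2-\lambda$ as a map $\mathbb{Z}_2\to\mathbb{Z}_2$. 1) If $\lambda\equiv 0\pmod 4$, then $f$ has two attracting fixed points, one in $4\mathbb{Z}_2$ with attracting basin $2\mathbb{Z}_2$, and the other in $1+4\mathbb{Z}_2$ with attracting basin $1+2\mathbb{Z}_2$. 2) If $\lambda\equiv 1\pmod 4$, then all of $\mathbb{Z}_2$ is attracted into a periodic orbit of period $2$ with one orbit point in $4\mathbb{Z}_2$ and the other in $3+4\mathbb{Z}_2$. 3) If $\lambda\equiv 2\pmod 4$, then $f$ has two attracting fixed points, one in $2+4\mathbb{Z}_2$ with attracting basin $2\mathbb{Z}_2$, and the other in $3+4\mathbb{Z}_2$ with attracting basin $1+2\mathbb{Z}_2$. 4) If $\lambda\equiv 3\pmod 4$, then all of $\mathbb{Z}_2$ is attracted into a periodic orbit of period $2$ with one orbit point in $1+4\mathbb{Z}_2$ and the other in $2+4\mathbb{Z}_2$.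
   Context: A point $x$ is attracted into a periodic orbit $O$ (or lies in its attracting basin) if the distance from $f^n(x)$ to $O$ tends to $0$ as $n\to\infty$; a fixed point is attracting if it has an open neighbourhood contained in its basin. *)

(* 2-adic integers Z_2 are modelled as the
   inverse limit  Z_2 = lim Z/2^n Z : an element is the coherent sequence
   of its residues  x n = (x mod 2^n) in [0, 2^n). *)
From mathcomp Require Import all_boot.
Set Implicit Arguments. Unset Strict Implicit. Unset Printing Implicit Defensive.

Definition Z2 := nat -> nat.

Definition is_Z2 (x : Z2) : Prop :=
  forall n, x n < 2 ^ n /\ x n.+1 %% 2 ^ n = x n.

Definition eqZ2 (x y : Z2) : Prop := forall n, x n = y n.

(* the residue of x modulo 2^k (x k) determines the ball of radius 2^-k:
   |x - y|_2 <= 2^-k  <->  x k = y k *)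

Definition fsq (lam x : Z2) : Z2 :=
  fun n => (x n * x n + (2 ^ n - lam n)) %% 2 ^ n.

Fixpoint inZ2s (o : Z2) (O : seq Z2) : Prop :=
  if O is o' :: O' then o' = o \/ inZ2s o O' else False.

(* dist(g^n(x), O) -> 0 for a finite orbit O (given as a list):
   for every k, eventually g^n(x) lies within 2^-k of some point of O. *)
Definition attracted_to (g : Z2 -> Z2) (x : Z2) (O : seq Z2) : Prop :=
  forall k, exists N, forall n, N <= n ->
    exists2 o, inZ2s o O & iter n g x k = o k.

Definition fixed_pt (g : Z2 -> Z2) (p : Z2) : Prop := eqZ2 (g p) p.

(* attracting fixed point: some open ball (p + 2^k Z_2) around p lies in its basin *)
Definition attracting_fixed (g : Z2 -> Z2) (p : Z2) : Prop :=
  fixed_pt g p /\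
  exists k, forall y, is_Z2 y -> y k = p k -> attracted_to g y [:: p].

Definition period2_orbit (g : Z2 -> Z2) (a b : Z2) : Prop :=
  eqZ2 (g a) b /\ eqZ2 (g b) a /\ ~ eqZ2 a b.

(* x in  r + 2^k Z_2  (with r < 2^k) *)
Definition in_coset (r k : nat) (x : Z2) : Prop := x k = r.

(* If r = s mod 2^k with k >= 1, then
   r^2 = s^2 mod 2^(k+1), so every application of f gains one bit of agreement
   between two points of the same parity; after n steps all residues mod 2^n of
   one parity have met.  Since f(x) = x + lambda mod 2, for lambda even f
   preserves parity and each parity class is the basin of one attracting fixed
   point, while for lambda odd f swaps the two classes and f o f has one
   attracting fixed point per class, which together form an attracting 2-cycle. *)
From mathcomp Require Import all_boot zify.
Set Implicit Arguments. Unset Strict Implicit. Unset Printing Implicit Defensive.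

Lemma eq_modn_dvd d m a b : d %| m -> a = b %[mod m] -> a = b %[mod d].
Proof. by move=> dm e; rewrite -(modn_dvdm a dm) e modn_dvdm. Qed.

Lemma eq_modn_exp2 m n a b : m <= n -> a = b %[mod 2 ^ n] -> a = b %[mod 2 ^ m].
Proof. by move=> mn; apply: eq_modn_dvd; rewrite dvdn_exp2l. Qed.

Lemma odd_modn_exp2 c n : 0 < n -> odd (c %% 2 ^ n) = odd c.
Proof.
move=> n_gt0; have := eq_modn_exp2 n_gt0 (modn_mod c (2 ^ n)).
by rewrite expn1 !modn2 => /(congr1 odd); rewrite !oddb.
Qed.

Lemma sqrn_congr_exp2S k r s : 0 < k ->
  r = s %[mod 2 ^ k] -> r * r = s * s %[mod 2 ^ k.+1].
Proof.
wlog le_sr : r s / s <= r.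
  move=> W k_gt0 e; case: (leqP s r) => [|/ltnW] le; first exact: W.
  by symmetry; apply: W.
move=> k_gt0 /eqP; rewrite eqn_mod_dvd // => dvd_k; apply/eqP.
rewrite eqn_mod_dvd; last exact: leq_mul.
have -> : r = s + (r - s) by rewrite subnKC.
set t := r - s in dvd_k *.
have -> : (s + t) * (s + t) - s * s = 2 * (s * t) + t * t by rewrite mulnDl !mulnDr; lia.
apply: dvdn_add; first by rewrite expnS dvdn_pmul2l // dvdn_mull.
apply: dvdn_trans (dvdn_mul dvd_k dvd_k).
by rewrite -expnD dvdn_exp2l // -addn1 leq_add2l.
Qed.

Lemma is_Z2_mod x m k : is_Z2 x -> m <= k -> x k %% 2 ^ m = x m.
Proof.
move=> hx le_mk; rewrite -(subnKC le_mk); elim: (k - m) => [|j IH].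
  by rewrite addn0 modn_small //; case: (hx m).
by rewrite addnS -IH -(proj2 (hx (m + j))) modn_dvdm // dvdn_exp2l // leq_addr.
Qed.

Lemma odd_is_Z2 x k : is_Z2 x -> 0 < k -> odd (x k) = odd (x 1).
Proof. by move=> hx k_gt0; rewrite -(is_Z2_mod hx k_gt0) odd_modn_exp2. Qed.
Definition fsq_mod (lam : Z2) (n r : nat) : nat := (r * r + (2 ^ n - lam n)) %% 2 ^ n.

Lemma fsq_mod_lt lam n r : fsq_mod lam n r < 2 ^ n.
Proof. by rewrite ltn_pmod // expn_gt0. Qed.

Lemma iter_fsq_mod_lt lam n j r : r < 2 ^ n -> iter j (fsq_mod lam n) r < 2 ^ n.
Proof. by case: j => [|j] //= _; apply: fsq_mod_lt. Qed.

Lemma iter_fsq lam x j n : iter j (fsq lam) x n = iter j (fsq_mod lam n) (x n).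
Proof. by elim: j => [|j IH] //=; rewrite /fsq IH. Qed.

Section ResidueMap.

Variable lam : Z2.
Hypothesis hlam : is_Z2 lam.

Lemma fsq_modDlam n r : fsq_mod lam n r + lam n = r * r %[mod 2 ^ n].
Proof.
have le_lam : lam n <= 2 ^ n by apply: ltnW; case: (hlam n).
by rewrite modnDml -addnA subnK // modnDr.
Qed.

Lemma fsq_mod_exp2S n r : fsq_mod lam n.+1 r %% 2 ^ n = fsq_mod lam n (r %% 2 ^ n).
Proof.
rewrite -(modn_small (fsq_mod_lt lam n (r %% 2 ^ n))).
apply/eqP; rewrite -(eqn_modDr (lam n)); apply/eqP.
rewrite fsq_modDlam modnMm -(proj2 (hlam n)) modnDmr.
exact/(eq_modn_exp2 (leqnSn n))/fsq_modDlam.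
Qed.

Lemma iter_fsq_mod_exp2S j n r :
  iter j (fsq_mod lam n.+1) r %% 2 ^ n = iter j (fsq_mod lam n) (r %% 2 ^ n).
Proof. by elim: j => [|j IH] //=; rewrite fsq_mod_exp2S IH. Qed.

Lemma fsq_Z2 x : is_Z2 x -> is_Z2 (fsq lam x).
Proof.
move=> hx n; split; first exact: fsq_mod_lt.
change (fsq_mod lam n.+1 (x n.+1) %% 2 ^ n = fsq_mod lam n (x n)).
by rewrite fsq_mod_exp2S (proj2 (hx n)).
Qed.

Lemma odd_fsq_mod n r : 0 < n -> odd (fsq_mod lam n r) = odd r (+) odd (lam 1).
Proof.
move=> n_gt0; have := eq_modn_exp2 n_gt0 (fsq_modDlam n r).
rewrite expn1 !modn2 oddD oddM andbb (odd_is_Z2 hlam n_gt0).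
by case: (odd (fsq_mod _ _ _)); case: (odd r); case: (odd (lam 1)).
Qed.

Lemma fsq_mod_congr n k r s : 0 < k -> r = s %[mod 2 ^ k] ->
  fsq_mod lam n r = fsq_mod lam n s %[mod 2 ^ minn k.+1 n].
Proof.
move=> k_gt0 e; apply/eqP; rewrite -(eqn_modDr (lam n)); apply/eqP.
rewrite !(eq_modn_exp2 (geq_minr _ _) (fsq_modDlam n _)).
exact: eq_modn_exp2 (geq_minl _ _) (sqrn_congr_exp2S k_gt0 e).
Qed.

Lemma iter_fsq_mod_collapse n j r s : r < 2 ^ n -> s < 2 ^ n ->
  (0 < n -> odd r = odd s) -> n <= j ->
  iter j (fsq_mod lam n) r = iter j (fsq_mod lam n) s.
Proof.
case: n => [|n] r_lt s_lt same_parity le_nj.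
  by move: r_lt s_lt; rewrite expn0 !ltnS !leqn0 => /eqP-> /eqP->.
have congr_i i : iter i (fsq_mod lam n.+1) r
    = iter i (fsq_mod lam n.+1) s %[mod 2 ^ minn i.+1 n.+1].
  elim: i => [|i IH]; first by rewrite /= (minn_idPl (ltn0Sn n)) expn1 !modn2 same_parity.
  have -> : minn i.+2 n.+1 = minn (minn i.+1 n.+1).+1 n.+1 by lia.
  by apply: fsq_mod_congr; rewrite // leq_min.
move: (congr_i j); rewrite (minn_idPr (leqW le_nj)).
by rewrite !modn_small //; apply: iter_fsq_mod_lt.
Qed.

End ResidueMap.

Definition parity_period (lam : Z2) (d : nat) : Prop :=
  forall n r, 0 < n -> odd (iter d (fsq_mod lam n) r) = odd r.

Section Attractor.

Variables (lam : Z2) (d : nat).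
Hypotheses (hlam : is_Z2 lam) (d_gt0 : 0 < d) (hd : parity_period lam d).

(* [d * n] steps collapse all residues mod [2 ^ n] of one parity to a single
   point, which is therefore the residue of the attracting [d]-periodic point. *)
Definition attractor (c : nat) : Z2 :=
  fun n => iter (d * n) (fsq_mod lam n) (c %% 2 ^ n).

Lemma odd_iter_muln n m y : 0 < n -> odd (iter (d * m) (fsq_mod lam n) y) = odd y.
Proof.
by move=> n_gt0; elim: m => [|m IH]; rewrite ?muln0 // mulnS iterD hd.
Qed.

Lemma attractor_lt c n : attractor c n < 2 ^ n.
Proof. by apply: iter_fsq_mod_lt; rewrite ltn_pmod // expn_gt0. Qed.

Lemma odd_attractor c n : 0 < n -> odd (attractor c n) = odd c.
Proof. by move=> n_gt0; rewrite /attractor odd_iter_muln // odd_modn_exp2. Qed.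

Lemma iter_muln_shift n y : y < 2 ^ n ->
  iter (d * n) (fsq_mod lam n) (iter d (fsq_mod lam n) y) = iter (d * n) (fsq_mod lam n) y.
Proof.
move=> y_lt; apply: iter_fsq_mod_collapse => //; first exact: iter_fsq_mod_lt.
  by move=> n_gt0; rewrite hd.
by rewrite leq_pmull.
Qed.

Lemma iter_attractor c n : iter d (fsq_mod lam n) (attractor c n) = attractor c n.
Proof.
by rewrite /attractor -iterD addnC iterD iter_muln_shift // ltn_pmod // expn_gt0.
Qed.

Lemma attractor_Z2 c : is_Z2 (attractor c).
Proof.
move=> n; split; first exact: attractor_lt.
rewrite /attractor iter_fsq_mod_exp2S // modn_dvdm ?dvdn_exp2l //.
by rewrite mulnS addnC iterD iter_muln_shift // ltn_pmod // expn_gt0.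
Qed.

Lemma iter_fsq_mod_attractor c k z n : z < 2 ^ k ->
  (0 < k -> odd z = odd c) -> d * k <= n ->
  iter n (fsq_mod lam k) z = iter (n %% d) (fsq_mod lam k) (attractor c k).
Proof.
move=> z_lt same_parity le_dk_n.
rewrite {1}(divn_eq n d) addnC iterD mulnC.
congr (iter _ _ _); rewrite (@iter_fsq_mod_collapse _ hlam _ _ _ (attractor c k)) //.
- by elim: (n %/ d) => [|m IH]; rewrite ?muln0 // mulnS iterD IH iter_attractor.
- exact: attractor_lt.
- by move=> k_gt0; rewrite odd_attractor // same_parity.
rewrite (leq_trans _ (leq_pmull _ d_gt0)) //.
by rewrite leq_divRL // mulnC.
Qed.

End Attractor.

Lemma lt2_odd_inj a b : a < 2 -> b < 2 -> odd a = odd b -> a = b.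
Proof. by case: a => [|[|]] //; case: b => [|[|]]. Qed.

Section EvenLambda.

Variable lam : Z2.
Hypotheses (hlam : is_Z2 lam) (lam_even : ~~ odd (lam 1)).

Lemma parity_period_even : parity_period lam 1.
Proof. by move=> n r n_gt0 /=; rewrite odd_fsq_mod // (negbTE lam_even) addbF. Qed.

Let hd := parity_period_even.

Lemma attractor_fixed c : fixed_pt (fsq lam) (attractor lam 1 c).
Proof. by move=> n; exact: (iter_attractor (d := 1) hlam isT hd). Qed.

Lemma attracted_to_attractor c x : c < 2 -> is_Z2 x ->
  attracted_to (fsq lam) x [:: attractor lam 1 c] <-> in_coset c 1 x.
Proof.
move=> c_lt2 hx; split.
  move=> /(_ 1) [N /(_ N (leqnn N))] [_ [<- | []]].
  rewrite iter_fsq => /(congr1 odd); rewrite -[N]mul1n odd_iter_muln // odd_attractor //.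
  exact: lt2_odd_inj (proj1 (hx 1)) c_lt2.
move=> x1 k; exists k => n le_kn; exists (attractor lam 1 c); first by left.
rewrite iter_fsq (iter_fsq_mod_attractor (c := c) hlam _ hd (proj1 (hx k))) ?mul1n ?modn1 //.
by move=> k_gt0; rewrite odd_is_Z2 // x1.
Qed.

Lemma attracting_fixed_attractor c : c < 2 -> attracting_fixed (fsq lam) (attractor lam 1 c).
Proof.
move=> c_lt2; split; first exact: attractor_fixed.
exists 1 => y hy y1; apply/attracted_to_attractor => //.
rewrite /in_coset y1; apply: lt2_odd_inj (attractor_lt lam 1 c 1) c_lt2 _.
exact: (odd_attractor hd c (isT : 0 < 1)).
Qed.

End EvenLambda.

Section OddLambda.

Variable lam : Z2.
Hypotheses (hlam : is_Z2 lam) (lam_odd : odd (lam 1)).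

Lemma parity_period_odd : parity_period lam 2.
Proof. by move=> n r n_gt0 /=; rewrite !odd_fsq_mod // lam_odd !addbT negbK. Qed.

Let hd := parity_period_odd.

Lemma period2_orbit_attractor c :
  period2_orbit (fsq lam) (attractor lam 2 c) (fsq lam (attractor lam 2 c)).
Proof.
split=> //; split; first by move=> n; exact: (iter_attractor (d := 2) hlam isT hd).
move=> /(_ 1) /(congr1 odd).
have -> : fsq lam (attractor lam 2 c) 1 = fsq_mod lam 1 (attractor lam 2 c 1) by [].
by rewrite odd_fsq_mod // lam_odd addbT; case: (odd _).
Qed.

Lemma attracted_to_attractor2 c x : is_Z2 x ->
  attracted_to (fsq lam) x [:: attractor lam 2 c; fsq lam (attractor lam 2 c)].
Proof.
move=> hx k; exists (2 * k).+1 => n lt_2k_n.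
set a := attractor lam 2 c.
have near_orbit z m : z < 2 ^ k -> (0 < k -> odd z = odd c) -> 2 * k <= m ->
    exists2 o, inZ2s o [:: a; fsq lam a] & iter m (fsq_mod lam k) z = o k.
  move=> z_lt same_parity le_2k_m.
  rewrite (iter_fsq_mod_attractor hlam _ hd z_lt same_parity le_2k_m) //.
  rewrite modn2; case: (odd m).
    by exists (fsq lam a); [right; left|].
  by exists a; [left|].
rewrite iter_fsq; have [same_parity | other_parity] := eqVneq (odd (x k)) (odd c).
  exact: near_orbit (proj1 (hx k)) (fun _ => same_parity) (ltnW lt_2k_n).
rewrite -(prednK (leq_ltn_trans (leq0n _) lt_2k_n)) iterSr.
apply: near_orbit; first exact: fsq_mod_lt.
  move=> k_gt0; rewrite odd_fsq_mod // lam_odd addbT.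
  by move: other_parity; case: (odd (x k)); case: (odd c).
by rewrite -ltnS prednK // (leq_ltn_trans (leq0n _) lt_2k_n).
Qed.

End OddLambda.

Lemma attracting_fixed_points_even lam u v : is_Z2 lam -> ~~ odd (lam 2) ->
  attractor lam 1 0 2 = u -> attractor lam 1 1 2 = v ->
  exists p q, is_Z2 p /\ is_Z2 q /\
    attracting_fixed (fsq lam) p /\ attracting_fixed (fsq lam) q /\
    in_coset u 2 p /\ in_coset v 2 q /\
    (forall x, is_Z2 x -> (attracted_to (fsq lam) x [:: p] <-> in_coset 0 1 x)) /\
    (forall x, is_Z2 x -> (attracted_to (fsq lam) x [:: q] <-> in_coset 1 1 x)).
Proof.
move=> hlam; rewrite (odd_is_Z2 hlam (isT : 0 < 2)) => lam_even p2 q2.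
have hd := parity_period_even hlam lam_even.
exists (attractor lam 1 0), (attractor lam 1 1).
split; [exact: attractor_Z2 | split; [exact: attractor_Z2 |]].
split; [exact: attracting_fixed_attractor | split; [exact: attracting_fixed_attractor |]].
by do 2!split=> //; split=> x; apply: attracted_to_attractor.
Qed.

Lemma period2_orbit_odd lam c u v : is_Z2 lam -> odd (lam 2) ->
  attractor lam 2 c 2 = u -> fsq lam (attractor lam 2 c) 2 = v ->
  exists a b, is_Z2 a /\ is_Z2 b /\ period2_orbit (fsq lam) a b /\
    in_coset u 2 a /\ in_coset v 2 b /\
    (forall x, is_Z2 x -> attracted_to (fsq lam) x [:: a; b]).
Proof.
move=> hlam; rewrite (odd_is_Z2 hlam (isT : 0 < 2)) => lam_odd a2 b2.
have hd := parity_period_odd hlam lam_odd.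
have ha : is_Z2 (attractor lam 2 c) by apply: attractor_Z2.
exists (attractor lam 2 c), (fsq lam (attractor lam 2 c)).
split; [exact: ha | split; [exact: fsq_Z2 | split; [exact: period2_orbit_attractor |]]].
by do 2!split=> //; move=> x; apply: attracted_to_attractor2.
Qed.

Theorem theoremD (lam : Z2) (hlam : is_Z2 lam) :
  (in_coset 0 2 lam ->
     exists p q, is_Z2 p /\ is_Z2 q /\
       attracting_fixed (fsq lam) p /\ attracting_fixed (fsq lam) q /\
       in_coset 0 2 p /\ in_coset 1 2 q /\
       (forall x, is_Z2 x -> (attracted_to (fsq lam) x [:: p] <-> in_coset 0 1 x)) /\
       (forall x, is_Z2 x -> (attracted_to (fsq lam) x [:: q] <-> in_coset 1 1 x)))
  /\
  (in_coset 1 2 lam ->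
     exists a b, is_Z2 a /\ is_Z2 b /\ period2_orbit (fsq lam) a b /\
       in_coset 0 2 a /\ in_coset 3 2 b /\
       (forall x, is_Z2 x -> attracted_to (fsq lam) x [:: a; b]))
  /\
  (in_coset 2 2 lam ->
     exists p q, is_Z2 p /\ is_Z2 q /\
       attracting_fixed (fsq lam) p /\ attracting_fixed (fsq lam) q /\
       in_coset 2 2 p /\ in_coset 3 2 q /\
       (forall x, is_Z2 x -> (attracted_to (fsq lam) x [:: p] <-> in_coset 0 1 x)) /\
       (forall x, is_Z2 x -> (attracted_to (fsq lam) x [:: q] <-> in_coset 1 1 x)))
  /\
  (in_coset 3 2 lam ->
     exists a b, is_Z2 a /\ is_Z2 b /\ period2_orbit (fsq lam) a b /\
       in_coset 1 2 a /\ in_coset 2 2 b /\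
       (forall x, is_Z2 x -> attracted_to (fsq lam) x [:: a; b])).
Proof.
rewrite /in_coset; split; [|split; [|split]] => lam2.
- by apply: attracting_fixed_points_even; rewrite ?lam2 // /attractor /fsq_mod lam2.
- by apply: (period2_orbit_odd (c := 0)); rewrite ?lam2 // /attractor /fsq /fsq_mod lam2.
- by apply: attracting_fixed_points_even; rewrite ?lam2 // /attractor /fsq_mod lam2.
- by apply: (period2_orbit_odd (c := 1)); rewrite ?lam2 // /attractor /fsq /fsq_mod lam2.
Qed.
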